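(* Assume that the ALS parameter sequence $(\mathbf p_k)_{k\in\mathbb N}$ is bounded. Then $$\max_{1\le\mu\le L}\big\|\nabla_\mu F(\mathbf p_{k,\mu-1})\big\|\xrightarrow[k\to\infty]{}0,$$ where for $\mathbf q=(q_1,\dots,q_L)\in P$, $\nabla_\mu F(\mathbf q)\in P_\mu$ denotes the gradient of $x\mapsto F(q_1,\dots,q_{\mu-1},x,q_{\mu+1},\dots,q_L)$ at $x=q_\mu$.
   Context: Let $\mathcal V=\bigotimes_{\nu=1}^d\mathbb R^{m_\nu}\cong\mathbb R^N$ with the Euclidean inner product. Let $A\in\mathbb R^{N\times N}$ be symmetric positive definite, $b\in\mathcal V\setminus\{0\}$, $f(v)=\frac{1}{\|b\|^2}(\frac12\langle Av,v\rangle-\langle b,v\rangle)$. Let $L\ge d$, $P_1,\dots,P_L$ finite-dimensional real inner product spaces, $P=P_1\times\dots\times P_L$ with product norm, $U:P\to\mathcal V$ multilinear, $F=f\circ U$. For $\mathbf p\in P$, $W_{\mu,\mathbf p^{[\mu]}}:P_\mu\to\mathcal V$ is $q\mapsto U(p_1,\dots,p_{\mu-1},q,p_{\mu+1},\dots,p_L)$; $X^T$ transpose, $X^+$ pseudoinverse. ALS: choose $\mathbf p_1=(p_1^1,\dots,p_L^1)\in P$; for $k=1,2,\dots$ and $\mu=1,\dots,L$ in order, $W_{k,\mu}:=W_{\mu,(p_1^{k+1},\dots,p_{\mu-1}^{k+1},p_{\mu+1}^k,\dots,p_L^k)}$ and $p_\mu^{k+1}:=(W_{k,\mu}^TAW_{k,\mu})^+W_{k,\mu}^Tb$.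 Put $\mathbf p_k=(p_1^k,\dots,p_L^k)$ and, for $\mu\in\{0,\dots,L\}$, $\mathbf p_{k,\mu}=(p_1^{k+1},\dots,p_\mu^{k+1},p_{\mu+1}^k,\dots,p_L^k)$. *)

From HB Require Import structures.
From mathcomp Require Import all_boot all_order all_algebra.
From mathcomp Require Import all_classical all_reals all_analysis.
Set Implicit Arguments. Unset Strict Implicit. Unset Printing Implicit Defensive.
Import Order.TTheory GRing.Theory Num.Theory.
Import numFieldNormedType.Exports.
Local Open Scope classical_set_scope.
Local Open Scope ring_scope.

Section Defs.
Variable R : realType.

Definition inner (n : nat) (x y : 'cV[R]_n) : R := (x^T *m y) 0 0.
Definition enorm (n : nat) (x : 'cV[R]_n) : R := Num.sqrt (inner x x).

Definition prodP (L : nat) (nP : 'I_L -> nat) := forall mu : 'I_L, 'cV[R]_(nP mu).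

Definition normP L (nP : 'I_L -> nat) (p : prodP nP) : R :=
  Num.sqrt (\sum_(mu < L) enorm (p mu) ^+ 2).

Definition upd L (nP : 'I_L -> nat) (p : prodP nP) (mu : 'I_L)
    (q : 'cV[R]_(nP mu)) : prodP nP :=
  fun i => match mu =P i with
           | ReflectT e => eq_rect mu (fun k => 'cV[R]_(nP k)) q i e
           | ReflectF _ => p i
           end.

Arguments upd {L nP} p mu q.
Definition multilinear L (nP : 'I_L -> nat) N (U : prodP nP -> 'cV[R]_N) :=
  forall (p : prodP nP) (mu : 'I_L) (a : R) (q1 q2 : 'cV[R]_(nP mu)),
    U (upd p mu (a *: q1 + q2)) = a *: U (upd p mu q1) + U (upd p mu q2).

(* matrix of the linear map W_{mu,p^[mu]} : P_mu -> V, q |-> U(p with q at mu)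
   (columns = images of the standard (orthonormal) basis vectors) *)
Definition Wmx L (nP : 'I_L -> nat) N (U : prodP nP -> 'cV[R]_N)
    (p : prodP nP) (mu : 'I_L) : 'M[R]_(N, nP mu) :=
  \matrix_(i < N, j < nP mu) (U (upd p mu (delta_mx j 0))) i 0.

Definition penrose m n (M : 'M[R]_(m, n)) (X : 'M[R]_(n, m)) : Prop :=
  [/\ M *m X *m M = M, X *m M *m X = X, (M *m X)^T = M *m X & (X *m M)^T = X *m M].
Definition mpinv m n (M : 'M[R]_(m, n)) : 'M[R]_(n, m) := xget 0 (penrose M).

Definition fobj N (A : 'M[R]_N) (b v : 'cV[R]_N) : R :=
  (enorm b ^+ 2)^-1 * (2^-1 * inner (A *m v) v - inner b v).

Definition is_gradient n (G : 'cV[R]_n -> R) (x g : 'cV[R]_n) : Prop :=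
  differentiable G x /\ ('d G x : 'cV[R]_n -> R) = (fun h => inner g h).
Definition gradient n (G : 'cV[R]_n -> R) (x : 'cV[R]_n) : 'cV[R]_n :=
  xget 0 (is_gradient G x).

Definition partial_grad L (nP : 'I_L -> nat) (F : prodP nP -> R)
    (q : prodP nP) (mu : 'I_L) : 'cV[R]_(nP mu) :=
  gradient (fun x => F (upd q mu x)) (q mu).

(* p_{k,mu-1} (0-indexed mu): components i < mu from step k+1, others from k *)
Definition pmid L (nP : 'I_L -> nat) (ps : nat -> prodP nP) (k : nat) (mu : 'I_L)
  : prodP nP := fun i => if (i < mu)%N then ps k.+1 i else ps k i.

Definition ALS_seq L (nP : 'I_L -> nat) N (A : 'M[R]_N) (b : 'cV[R]_N)
    (U : prodP nP -> 'cV[R]_N) (ps : nat -> prodP nP) : Prop :=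
  forall (k : nat) (mu : 'I_L),
    let W := Wmx U (pmid ps k mu) mu in
    ps k.+1 mu = mpinv (W^T *m A *m W) *m (W^T *m b).

End Defs.

From HB Require Import structures.
From mathcomp Require Import all_boot all_order all_algebra.
From mathcomp Require Import all_classical all_reals all_analysis.
From mathcomp Require Import ring lra.
Set Implicit Arguments. Unset Strict Implicit. Unset Printing Implicit Defensive.
Import Order.TTheory GRing.Theory Num.Theory.
Import numFieldNormedType.Exports.
Local Open Scope classical_set_scope.
Local Open Scope ring_scope.

(** On the [mu]-th block, with [W] the matrix of the linear map [x |-> U(.., x, ..)],
  the objective is the quadratic [x |-> c^-1 (1/2 <M x, x> - <beta, x>)], [c = |b|^2], with
  [M = W^T A W] and [beta = W^T b], and the ALS update [xs] solves [M xs = beta].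
  Hence the partial gradient at the current iterate [x] is [c^-1 M (x - xs)], while the
  micro-step decreases [F] by exactly [c^-1/2 <M (x - xs), x - xs>].  Since
  [|M d|^2 <= K <M d, d>] whenever [0 <= M <= K], the squared partial gradient is at most a
  constant times the decrease of [F] over a sweep.  Boundedness of the iterates bounds
  [W], hence [K], uniformly, and makes [F(p_k)] bounded below; being nonincreasing,
  [F(p_k)] converges, so its successive decreases, and with them the partial gradients,
  tend to [0]. *)

Arguments upd {R L nP} p mu q.

Section ProductSpace.
Variables (R : realType) (L : nat) (nP : 'I_L -> nat).
Implicit Types (p r : prodP R nP) (mu i : 'I_L).

Lemma prodP_ext p r : (forall i, p i = r i) -> p = r.
Proof. exact: functional_extensionality_dep. Qed.

Lemma upd_eq p mu x : upd p mu x mu = x.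
Proof. by rewrite /upd; case: eqP => // e; rewrite (eq_irrelevance e erefl). Qed.

Lemma upd_neq p mu x i : mu != i -> upd p mu x i = p i.
Proof. by rewrite /upd; case: eqP. Qed.

Lemma upd_id p mu : upd p mu (p mu) = p.
Proof.
apply: prodP_ext => i; have [<-|ne] := eqVneq mu i; first by rewrite upd_eq.
by rewrite upd_neq.
Qed.

Definition splice (n : nat) p r : prodP R nP :=
  fun i => if (i < n)%N then p i else r i.

Lemma pmidE (ps : nat -> prodP R nP) k mu : pmid ps k mu = splice mu (ps k.+1) (ps k).
Proof. by []. Qed.

Lemma splice0 p r : splice 0 p r = r.
Proof. by []. Qed.

Lemma spliceL p r : splice L p r = p.
Proof. by apply: prodP_ext => i; rewrite /splice ltn_ord. Qed.

Lemma splice_at p r mu : splice mu p r mu = r mu.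
Proof. by rewrite /splice ltnn. Qed.

Lemma splice_succ p r mu : splice mu.+1 p r = upd (splice mu p r) mu (p mu).
Proof.
apply: prodP_ext => i; have [<-|ne] := eqVneq mu i; first by rewrite upd_eq /splice ltnSn.
rewrite upd_neq // /splice ltnS leq_eqVlt.
by have -> : (nat_of_ord i == mu) = false by apply: contra_neqF ne => /eqP/val_inj.
Qed.

Lemma upd_splice p r mu x : upd (splice mu p r) mu x = splice mu p (upd r mu x).
Proof.
apply: prodP_ext => i; have [<-|ne] := eqVneq mu i; first by rewrite upd_eq splice_at upd_eq.
by rewrite upd_neq // /splice upd_neq.
Qed.

Lemma enorm_le_normP p i : enorm (p i) <= normP p.
Proof.
rewrite -[enorm _]ger0_norm ?sqrtr_ge0 // -sqrtr_sqr ler_wsqrtr //.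
by rewrite (bigD1 i) //= lerDl sumr_ge0 // => j _; rewrite sqr_ge0.
Qed.

End ProductSpace.

Section InnerProduct.
Variable R : realType.

Lemma innerE n (x y : 'cV[R]_n) : inner x y = \sum_i x i 0 * y i 0.
Proof. by rewrite /inner mxE; apply: eq_bigr => i _; rewrite mxE. Qed.

Lemma innerC n (x y : 'cV[R]_n) : inner x y = inner y x.
Proof. by rewrite !innerE; apply: eq_bigr => i _; rewrite mulrC. Qed.

Lemma innerDl n (x y z : 'cV[R]_n) : inner (x + y) z = inner x z + inner y z.
Proof. by rewrite !innerE -big_split; apply: eq_bigr => i _; rewrite mxE mulrDl. Qed.

Lemma innerNl n (x z : 'cV[R]_n) : inner (- x) z = - inner x z.
Proof. by rewrite !innerE -sumrN; apply: eq_bigr => i _; rewrite mxE mulNr. Qed.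

Lemma innerBl n (x y z : 'cV[R]_n) : inner (x - y) z = inner x z - inner y z.
Proof. by rewrite innerDl innerNl. Qed.

Lemma innerZl n a (x z : 'cV[R]_n) : inner (a *: x) z = a * inner x z.
Proof. by rewrite !innerE mulr_sumr; apply: eq_bigr => i _; rewrite mxE mulrA. Qed.

Lemma innerBr n (x y z : 'cV[R]_n) : inner z (x - y) = inner z x - inner z y.
Proof. by rewrite !(innerC z) innerBl. Qed.

Lemma innerZr n a (x z : 'cV[R]_n) : inner z (a *: x) = a * inner z x.
Proof. by rewrite !(innerC z) innerZl. Qed.

Lemma inner_mulmxl m n (M : 'M[R]_(m, n)) x y : inner (M *m x) y = inner x (M^T *m y).
Proof. by rewrite /inner trmx_mul mulmxA. Qed.

Lemma inner_ge0 n (x : 'cV[R]_n) : 0 <= inner x x.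
Proof. by rewrite innerE sumr_ge0 // => i _; rewrite -expr2 sqr_ge0. Qed.

Lemma inner_eq0 n (x : 'cV[R]_n) : inner x x = 0 -> x = 0.
Proof.
rewrite innerE => /eqP; rewrite psumr_eq0 => [/allP x0|i _]; last by rewrite -expr2 sqr_ge0.
apply/matrixP => i j; rewrite (ord1 j) mxE.
by have := x0 i (mem_index_enum i); rewrite /= mulf_eq0 orbb => /eqP.
Qed.

Lemma sqr_enorm n (x : 'cV[R]_n) : enorm x ^+ 2 = inner x x.
Proof. by rewrite sqr_sqrtr // inner_ge0. Qed.

Lemma normr_coord_le_enorm n (x : 'cV[R]_n) i : `|x i 0| <= enorm x.
Proof.
rewrite -sqrtr_sqr ler_sqrt ?inner_ge0 // innerE (bigD1 i) //= -expr2 lerDl.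
by rewrite sumr_ge0 // => j _; rewrite -expr2 sqr_ge0.
Qed.

Lemma mulmx_tr_eq0 m n (X : 'M[R]_(m, n)) : X *m X^T = 0 -> X = 0.
Proof.
move=> XX0; apply/matrixP => i j; rewrite mxE.
have /eqP : (X *m X^T) i i = 0 by rewrite XX0 mxE.
rewrite mxE psumr_eq0 => [/allP/(_ j (mem_index_enum j))|k _]; last first.
  by rewrite mxE -expr2 sqr_ge0.
by rewrite /= mxE mulf_eq0 orbb => /eqP.
Qed.

Lemma mulmx_eq0_all m n (Z : 'M[R]_(m, n)) : (forall v : 'cV[R]_n, Z *m v = 0) -> Z = 0.
Proof.
move=> Z0; apply/matrixP => i j.
have /(congr1 (fun w : 'cV[R]_m => w i 0)) := Z0 (delta_mx j 0); rewrite !mxE => <-.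
rewrite (bigD1 j) //= big1 ?addr0 => [|k /negPf ne]; first by rewrite !mxE !eqxx mulr1.
by rewrite !mxE ne mulr0.
Qed.

End InnerProduct.

Section EntrySum.
Variable R : realType.

Definition mxsum m n (M : 'M[R]_(m, n)) : R := \sum_i \sum_j `|M i j|.

Lemma mxsum_ge0 m n (M : 'M[R]_(m, n)) : 0 <= mxsum M.
Proof. by rewrite sumr_ge0 // => i _; rewrite sumr_ge0. Qed.

Lemma normr_le_mxsum m n (M : 'M[R]_(m, n)) i j : `|M i j| <= mxsum M.
Proof.
rewrite /mxsum (bigD1 i) //= (bigD1 j) //= -addrA lerDl.
by rewrite addr_ge0 ?sumr_ge0 // => *; rewrite sumr_ge0.
Qed.

Lemma mxsum_tr m n (M : 'M[R]_(m, n)) : mxsum M^T = mxsum M.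
Proof.
by rewrite /mxsum exchange_big; apply: eq_bigr => i _; apply: eq_bigr => j _; rewrite mxE.
Qed.

Lemma mxsum_mulmx m n p (M : 'M[R]_(m, n)) (N : 'M[R]_(n, p)) :
  mxsum (M *m N) <= mxsum M * mxsum N.
Proof.
rewrite /mxsum mulr_suml; apply: ler_sum => i _; rewrite mulr_suml.
apply: le_trans (_ : \sum_j \sum_k `|M i k| * `|N k j| <= _).
  apply: ler_sum => j _; rewrite mxE; apply: le_trans (ler_norm_sum _ _ _) _.
  by apply: ler_sum => k _; rewrite normrM.
rewrite exchange_big /=; apply: ler_sum => k _; rewrite -mulr_sumr ler_wpM2l //.
by rewrite (bigD1 k) //= lerDl sumr_ge0 // => *; rewrite sumr_ge0.
Qed.

Lemma mxsum_cV n (x : 'cV[R]_n) : mxsum x = \sum_i `|x i 0|.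
Proof. by apply: eq_bigr => i _; rewrite big_ord1. Qed.

Lemma mxsum_le_enorm n (x : 'cV[R]_n) : mxsum x <= n%:R * enorm x.
Proof.
rewrite mxsum_cV; apply: le_trans (_ : \sum_(i < n) enorm x <= _).
  by apply: ler_sum => i _; apply: normr_coord_le_enorm.
by rewrite sumr_const card_ord mulr_natl.
Qed.

Lemma mxsum_delta n (j : 'I_n) : mxsum (delta_mx j 0 : 'cV[R]_n) = 1.
Proof.
rewrite mxsum_cV (bigD1 j) //= big1 ?addr0 => [|k /negPf ne]; first by rewrite mxE !eqxx normr1.
by rewrite mxE ne normr0.
Qed.

Lemma normr_inner_le n (x y : 'cV[R]_n) : `|inner x y| <= mxsum x * mxsum y.
Proof.
by rewrite -mxsum_tr; apply: le_trans (normr_le_mxsum _ 0 0) (mxsum_mulmx _ _).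
Qed.

Lemma inner_mulmx_le_mxsum n (M : 'M[R]_n) u : inner (M *m u) u <= mxsum M * inner u u.
Proof.
rewrite innerE /mxsum !mulr_suml; apply: ler_sum => i _; rewrite mxE mulr_suml.
apply: le_trans (ler_norm _) _; apply: le_trans (ler_norm_sum _ _ _) _.
rewrite mulr_suml; apply: ler_sum => j _; rewrite !normrM -mulrA ler_wpM2l //.
by rewrite -sqr_enorm expr2 mulrC ler_pM ?normr_coord_le_enorm.
Qed.

End EntrySum.

Section Pseudoinverse.
Variable R : realType.

Lemma mulmx_tr_unitmx m n (C : 'M[R]_(m, n)) : row_free C -> C *m C^T \in unitmx.
Proof.
move=> freeC; rewrite -row_free_unit -kermx_eq0; apply/eqP.
have : (kermx (C *m C^T) *m C) *m (kermx (C *m C^T) *m C)^T = 0.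
  by rewrite trmx_mul mulmxA -(mulmxA _ C) mulmx_ker mul0mx.
by move/mulmx_tr_eq0/eqP; rewrite mulmx_free_eq0 // => /eqP.
Qed.

(* The full-rank factorisation formula M^+ = C^T (C C^T)^-1 (B^T B)^-1 B^T for M = B C. *)
Lemma penrose_full_rank m n r (B : 'M[R]_(m, r)) (C : 'M[R]_(r, n)) :
  row_free C -> row_free B^T -> exists X, penrose (B *m C) X.
Proof.
move=> freeC freeB.
have uB := mulmx_tr_unitmx freeB; rewrite trmxK in uB.
have uC := mulmx_tr_unitmx freeC.
set G1 := B^T *m B in uB *; set G2 := C *m C^T in uC *.
have sG1 : G1^T = G1 by rewrite /G1 trmx_mul trmxK.
have sG2 : G2^T = G2 by rewrite /G2 trmx_mul trmxK.
set X := C^T *m invmx G2 *m invmx G1 *m B^T; exists X.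
have MX : B *m C *m X = B *m invmx G1 *m B^T.
  by rewrite !mulmxA -(mulmxA B C) -/G2 -(mulmxA B G2) mulmxV // mulmx1.
have XM : X *m (B *m C) = C^T *m invmx G2 *m C.
  by rewrite !mulmxA -(mulmxA _ B^T B) -/G1 -(mulmxA _ (invmx G1) G1) mulVmx // mulmx1.
split.
- by rewrite MX !mulmxA -(mulmxA _ B^T B) -/G1 -(mulmxA _ (invmx G1) G1) mulVmx // mulmx1.
- by rewrite XM !mulmxA -(mulmxA _ C C^T) -/G2 -(mulmxA _ (invmx G2) G2) mulVmx // mulmx1.
- by rewrite MX !trmx_mul trmxK trmx_inv sG1 mulmxA.
- by rewrite XM !trmx_mul trmxK trmx_inv sG2 mulmxA.
Qed.

Lemma mpinvP m n (M : 'M[R]_(m, n)) : penrose M (mpinv M).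
Proof.
apply: (xgetPex 0); rewrite -[M in penrose M]mulmx_base.
apply: penrose_full_rank; first exact: row_base_free.
by rewrite /row_free mxrank_tr; apply: col_base_full.
Qed.

End Pseudoinverse.

Section Multilinear.
Variables (R : realType) (L : nat) (nP : 'I_L -> nat) (N : nat).
Variable U : prodP R nP -> 'cV[R]_N.
Implicit Types (p r : prodP R nP) (mu : 'I_L).

Lemma mxsum_Wmx p mu : mxsum (Wmx U p mu) = \sum_j mxsum (U (upd p mu (delta_mx j 0))).
Proof.
rewrite /mxsum exchange_big; apply: eq_bigr => j _.
by apply: eq_bigr => i _; rewrite big_ord1 mxE.
Qed.

Hypothesis U_ml : multilinear U.

Lemma multilinear_upd0 p mu : U (upd p mu 0) = 0.
Proof.
have := @U_ml p mu 1 0 0; rewrite !scale1r addr0.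
by move/esym/(congr1 (fun v => v - U (upd p mu 0))); rewrite addrK subrr.
Qed.

Lemma multilinear_updD p mu x y : U (upd p mu (x + y)) = U (upd p mu x) + U (upd p mu y).
Proof. by have := @U_ml p mu 1 x y; rewrite !scale1r. Qed.

Lemma multilinear_updZ p mu a x : U (upd p mu (a *: x)) = a *: U (upd p mu x).
Proof. by have := @U_ml p mu a x 0; rewrite !addr0 multilinear_upd0 addr0. Qed.

Lemma multilinear_updE p mu x : U (upd p mu x) = Wmx U p mu *m x.
Proof.
have -> : x = \sum_j x j 0 *: delta_mx j 0.
  apply/matrixP => i k; rewrite (ord1 k) summxE (bigD1 i) //= big1 ?addr0.
    by rewrite !mxE !eqxx mulr1.
  by move=> j /negPf ne; rewrite !mxE eq_sym ne mulr0.
rewrite (big_morph (fun q => U (upd p mu q)) (@multilinear_updD p mu) (multilinear_upd0 p mu)).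
apply/matrixP => i k; rewrite (ord1 k) summxE mxE.
apply: eq_bigr => j _; rewrite multilinear_updZ !mxE summxE (bigD1 j) //= big1 ?addr0.
  by rewrite !mxE !eqxx mulr1 mulrC.
by move=> l /negPf ne; rewrite !mxE eq_sym ne ?mulr0 ?mul0r.
Qed.

(* Expand slot [n] in the standard basis and bound each term by induction. *)
Lemma multilinear_splice_bound n : (n <= L)%N -> forall r, exists K, 0 <= K /\
  forall S p, (forall i, mxsum (p i) <= S) -> mxsum (U (splice n p r)) <= K * S ^+ n.
Proof.
elim: n => [_ r|n IH ltnL r].
  by exists (mxsum (U r)); split=> [|S p _]; rewrite ?expr0 ?mulr1 ?mxsum_ge0.
pose i0 : 'I_L := Ordinal ltnL.
have /choice [K hK] := fun j : 'I_(nP i0) => IH (ltnW ltnL) (upd r i0 (delta_mx j 0)).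
exists (\sum_j K j); split=> [|S p pS]; first by rewrite sumr_ge0 // => j _; case: (hK j).
have S0 : 0 <= S := le_trans (mxsum_ge0 _) (pS i0).
rewrite (splice_succ p r i0) multilinear_updE exprSr mulrA.
apply: le_trans (mxsum_mulmx _ _) _; apply: ler_pM; rewrite ?mxsum_ge0 //.
rewrite mxsum_Wmx mulr_suml; apply: ler_sum => j _; rewrite upd_splice.
by have [_] := hK j; apply.
Qed.

Lemma multilinear_bound : exists K, 0 <= K /\
  forall S p, (forall i, mxsum (p i) <= S) -> mxsum (U p) <= K * S ^+ L.
Proof.
have [K [K0 hK]] := multilinear_splice_bound (leqnn L) (fun=> 0).
by exists K; split=> // S p pS; rewrite -(spliceL p (fun=> 0)); apply: hK.
Qed.

End Multilinear.

Section Gradient.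
Variables (R : realType) (n : nat).
Local Notation V := 'cV[R]_n.

Lemma is_diff_coord (x : V) j : is_diff x (fun y : V => y j 0) (fun y : V => y j 0).
Proof.
have coord_lin : linear (fun y : V => y j 0 : R) by move=> a y z; rewrite !mxE.
pose f : {linear V -> R} := HB.pack (fun y : V => y j 0 : R)
  (GRing.isLinear.Build _ _ _ _ _ coord_lin).
have f_cont : continuous f by apply: coord_continuous.
have -> : (fun y : V => y j 0) = f by [].
by apply: DiffDef; [exact: linear_differentiable | rewrite diff_lin].
Qed.

Lemma is_diff_sum (I : finType) (f df : I -> V -> R) x :
  (forall i, is_diff x (f i) (df i)) -> is_diff x (\sum_i f i) (\sum_i df i).
Proof.
move=> fdf; elim/big_ind2 : _ => //; first exact: is_diff_cst.
by move=> *; apply: is_diffD.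
Qed.

Lemma is_diff_linear_form (c : 'I_n -> R) x :
  is_diff x (fun y : V => \sum_j c j * y j 0) (fun y : V => \sum_j c j * y j 0).
Proof.
have -> : (fun y : V => \sum_j c j * y j 0) = \sum_j c j *: (fun y : V => y j 0).
  by apply: funext => y; rewrite fct_sumE.
by apply: is_diff_sum => j; apply: is_diffZ; apply: is_diff_coord.
Qed.

Lemma is_diff_quadratic (M : 'M[R]_n) (x : V) :
  is_diff x (fun y : V => inner (M *m y) y)
    (fun h => inner (M *m x) h + inner (M^T *m x) h).
Proof.
have Mrow i : is_diff x (fun y : V => (M *m y) i 0) (fun y : V => (M *m y) i 0).
  have -> : (fun y : V => (M *m y) i 0) = (fun y : V => \sum_j M i j * y j 0).
    by apply: funext => y; rewrite mxE.
  exact: is_diff_linear_form.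
have -> : (fun y : V => inner (M *m y) y) =
    \sum_i (fun y : V => (M *m y) i 0) * (fun y : V => y i 0).
  by apply: funext => y; rewrite innerE fct_sumE.
apply: is_diff_eq (is_diff_sum (fun i => is_diffM (Mrow i) (is_diff_coord x i))) _.
by apply: funext => h; rewrite fct_sumE (inner_mulmxl M^T) trmxK !innerE -big_split.
Qed.

Definition quadf (c : R) (M : 'M[R]_n) (beta x : V) : R :=
  c * (2^-1 * inner (M *m x) x - inner beta x).

Lemma is_gradient_quadf c (M : 'M[R]_n) beta x : M^T = M ->
  is_gradient (quadf c M beta) x (c *: (M *m x - beta)).
Proof.
move=> sM.
have beta_diff : is_diff x (inner beta) (inner beta).
  have -> : inner beta = (fun y : V => \sum_i beta i 0 * y i 0).
    by apply: funext => y; rewrite innerE.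
  exact: is_diff_linear_form.
have q_diff := is_diffZ c (is_diffB (is_diffZ 2^-1 (is_diff_quadratic M x)) beta_diff).
split; first by apply: ex_diff; exact: q_diff.
rewrite (@diff_val _ _ _ _ _ _ _ q_diff) sM; apply: funext => h /=.
rewrite innerZl innerBl; congr (_ * (_ - _)).
by change (2^-1 * (inner (M *m x) h + inner (M *m x) h) = inner (M *m x) h); field.
Qed.

Lemma is_gradient_uniq (G : V -> R) x g1 g2 :
  is_gradient G x g1 -> is_gradient G x g2 -> g1 = g2.
Proof.
move=> [_ dG1] [_ dG2]; have /(congr1 (fun f => f (g1 - g2))) := etrans (esym dG1) dG2.
by move=> /= /eqP; rewrite -subr_eq0 -innerBl => /eqP/inner_eq0/eqP; rewrite subr_eq0 => /eqP.
Qed.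

Lemma gradient_eq (G : V -> R) x g : is_gradient G x g -> gradient G x = g.
Proof.
by move=> Gg; apply: (is_gradient_uniq _ Gg); apply: (xgetPex 0); exists g.
Qed.

End Gradient.

Section QuadraticModel.
Variables (R : realType) (n : nat).

Lemma quadf_sub_min c (M : 'M[R]_n) beta x xs : M^T = M -> M *m xs = beta ->
  quadf c M beta x - quadf c M beta xs = c * (2^-1 * inner (M *m (x - xs)) (x - xs)).
Proof.
move=> sM Mxs; rewrite /quadf -mulrBr; congr (_ * _).
rewrite mulmxBr Mxs !innerBl !innerBr (inner_mulmxl M x xs) sM Mxs (innerC x beta).
by field.
Qed.

(* Expand the positivity of <M (Md - K d), Md - K d>, using the symmetry of M. *)
Lemma sqr_mulmx_le (M : 'M[R]_n) (K : R) d : M^T = M -> 0 < K ->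
  (forall u, 0 <= inner (M *m u) u) -> (forall u, inner (M *m u) u <= K * inner u u) ->
  inner (M *m d) (M *m d) <= K * inner (M *m d) d.
Proof.
move=> sM K0 M_psd M_le; set u := M *m d.
have := M_psd (u - K *: d).
rewrite mulmxBr -scalemxAr -/u innerBl !innerBr !innerZl !innerZr (inner_mulmxl M u d) sM.
rewrite -/u; have := M_le u; nra.
Qed.

End QuadraticModel.

Section Objective.
Variables (R : realType) (N : nat) (A : 'M[R]_N) (b : 'cV[R]_N).
Hypothesis A_pd : forall v : 'cV[R]_N, v != 0 -> 0 < inner (A *m v) v.

Lemma posdef_ge0 v : 0 <= inner (A *m v) v.
Proof.
have [->|/A_pd/ltW //] := eqVneq v 0.
by rewrite mulmx0 /inner mulmx0 mxE.
Qed.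

Lemma fobj_ge v : - ((enorm b ^+ 2)^-1 * (mxsum b * mxsum v)) <= fobj A b v.
Proof.
rewrite /fobj -mulrN ler_wpM2l ?invr_ge0 ?sqr_ge0 //.
have := posdef_ge0 v; have := ler_norm (inner b v); have := normr_inner_le b v.
lra.
Qed.

End Objective.

Section LeastSquaresBlock.
Variables (R : realType) (N n : nat) (A : 'M[R]_N) (b : 'cV[R]_N) (W : 'M[R]_(N, n)).
Local Notation M := (W^T *m A *m W).

Lemma inner_gram u : inner (M *m u) u = inner (A *m (W *m u)) (W *m u).
Proof. by rewrite -!mulmxA inner_mulmxl trmxK. Qed.

Lemma fobj_mulmx x : fobj A b (W *m x) = quadf (enorm b ^+ 2)^-1 M (W^T *m b) x.
Proof. by rewrite /fobj /quadf inner_gram (inner_mulmxl W^T) trmxK (innerC b). Qed.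

Lemma gram_sym : A^T = A -> M^T = M.
Proof. by move=> sA; rewrite !trmx_mul trmxK sA mulmxA. Qed.

Hypotheses (sA : A^T = A) (A_pd : forall v : 'cV[R]_N, v != 0 -> 0 < inner (A *m v) v).

Lemma gram_ge0 u : 0 <= inner (M *m u) u.
Proof. by rewrite inner_gram posdef_ge0. Qed.

(* Q := 1 - M M^+ is the orthogonal projector onto ker M = ker W, so it kills W^T b. *)
Lemma gram_mpinv_normal_eq : M *m (mpinv M *m (W^T *m b)) = W^T *m b.
Proof.
have [MXM _ MXsym _] := mpinvP M; set X := mpinv M in MXM MXsym *.
set Q : 'M[R]_n := 1%:M - M *m X.
have sQ : Q^T = Q by rewrite /Q linearB /= trmx1 MXsym.
have QM : Q *m M = 0 by rewrite /Q mulmxBl mul1mx MXM subrr.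
have MQ : M *m Q = 0 by apply: trmx_inj; rewrite trmx_mul sQ gram_sym // QM trmx0.
have WQ : W *m Q = 0.
  apply: mulmx_eq0_all => v; apply/eqP/negPn/negP => /A_pd.
  by rewrite -mulmxA -inner_gram mulmxA MQ mul0mx /inner trmx0 mul0mx mxE ltxx.
have QWt : Q *m W^T = 0 by rewrite -[Q]sQ -trmx_mul WQ trmx0.
have /eqP : Q *m (W^T *m b) = 0 by rewrite mulmxA QWt mul0mx.
by rewrite /Q mulmxBl mul1mx subr_eq0 mulmxA => /eqP <-.
Qed.

End LeastSquaresBlock.

Lemma nonincreasing_subSn_cvg0 (R : realType) (h : R ^nat) (lb : R) :
  (forall k, h k.+1 <= h k) -> (forall k, lb <= h k) ->
  (fun k => h k - h k.+1) @ \oo --> (0 : R).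
Proof.
move=> /nonincreasing_seqP h_noninc h_lb.
have h_lbound : has_lbound (range h) by exists lb => _ [k _ <-].
have h_cvg := nonincreasing_cvgn h_noninc h_lbound.
have hS_cvg : (fun k => h k.+1) @ \oo --> inf (range h) by rewrite -cvg_shiftS in h_cvg.
by have := cvgB h_cvg hS_cvg; rewrite subrr; apply.
Qed.

Section ALS.
Variables (R : realType) (N L : nat) (nP : 'I_L -> nat) (A : 'M[R]_N) (b : 'cV[R]_N).
Variables (U : prodP R nP -> 'cV[R]_N) (ps : nat -> prodP R nP).
Hypotheses (sA : A^T = A) (A_pd : forall v : 'cV[R]_N, v != 0 -> 0 < inner (A *m v) v).
Hypotheses (b_neq0 : b != 0) (U_ml : multilinear U) (ps_als : ALS_seq A b U ps).

Local Notation c := (enorm b ^+ 2).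
Local Notation F := (fun p => fobj A b (U p)).
Local Notation W k mu := (Wmx U (pmid ps k mu) mu).
Local Notation M k mu := ((W k mu)^T *m A *m W k mu).

Lemma enorm_sqr_gt0 : 0 < c.
Proof.
rewrite sqr_enorm lt0r inner_ge0 andbT.
by apply: contra b_neq0 => /eqP/inner_eq0 ->.
Qed.

Lemma als_normal_eq k mu : M k mu *m ps k.+1 mu = (W k mu)^T *m b.
Proof. by rewrite (@ps_als k mu) gram_mpinv_normal_eq. Qed.

Lemma F_upd_pmid k mu x :
  F (upd (pmid ps k mu) mu x) = quadf c^-1 (M k mu) ((W k mu)^T *m b) x.
Proof. by rewrite /= multilinear_updE // fobj_mulmx. Qed.

Lemma partial_grad_als k mu :
  partial_grad F (pmid ps k mu) mu = c^-1 *: (M k mu *m (ps k mu - ps k.+1 mu)).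
Proof.
rewrite /partial_grad (funext (@F_upd_pmid k mu)) pmidE splice_at.
by rewrite mulmxBr als_normal_eq; apply/gradient_eq/is_gradient_quadf/gram_sym.
Qed.

Lemma F_pmid_decrease k mu :
  F (pmid ps k mu) - F (splice mu.+1 (ps k.+1) (ps k)) =
  c^-1 * (2^-1 * inner (M k mu *m (ps k mu - ps k.+1 mu)) (ps k mu - ps k.+1 mu)).
Proof.
rewrite splice_succ -pmidE -{1}(upd_id (pmid ps k mu) mu) !F_upd_pmid pmidE splice_at.
by apply: quadf_sub_min; [exact: gram_sym | exact: als_normal_eq].
Qed.

Lemma F_pmid_decrease_ge0 k mu : 0 <= F (pmid ps k mu) - F (splice mu.+1 (ps k.+1) (ps k)).
Proof.
rewrite F_pmid_decrease; apply: mulr_ge0; first by rewrite invr_ge0 ltW ?enorm_sqr_gt0.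
by apply: mulr_ge0; [rewrite invr_ge0 | exact: gram_ge0].
Qed.

Lemma F_als_sum_decrease k :
  F (ps k) - F (ps k.+1) =
  \sum_(mu < L) (F (pmid ps k mu) - F (splice mu.+1 (ps k.+1) (ps k))).
Proof.
rewrite -(big_mkord xpredT
  (fun n => F (splice n (ps k.+1) (ps k)) - F (splice n.+1 (ps k.+1) (ps k)))).
rewrite (telescope_sumr_eq (fun n => - F (splice n (ps k.+1) (ps k)))) //.
  by rewrite splice0 spliceL opprK addrC.
by move=> n _; rewrite opprK addrC.
Qed.

Lemma F_pmid_decrease_le k mu :
  F (pmid ps k mu) - F (splice mu.+1 (ps k.+1) (ps k)) <= F (ps k) - F (ps k.+1).
Proof.
rewrite F_als_sum_decrease (bigD1 mu) //= lerDl sumr_ge0 // => i _.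
exact: F_pmid_decrease_ge0.
Qed.

Lemma F_als_nonincreasing k : F (ps k.+1) <= F (ps k).
Proof.
by rewrite -subr_ge0 F_als_sum_decrease sumr_ge0 // => mu _; apply: F_pmid_decrease_ge0.
Qed.

Lemma sqr_partial_grad_le K k mu : 0 < K ->
  (forall u, inner (M k mu *m u) u <= K * inner u u) ->
  enorm (partial_grad F (pmid ps k mu) mu) ^+ 2 <= 2 * K * c^-1 * (F (ps k) - F (ps k.+1)).
Proof.
move=> K0 M_le; set d := ps k mu - ps k.+1 mu.
have c0 := enorm_sqr_gt0.
rewrite partial_grad_als sqr_enorm innerZl innerZr.
apply: le_trans (_ : c^-1 * (c^-1 * (K * inner (M k mu *m d) d)) <= _).
  do 2 (apply: ler_wpM2l; first by rewrite invr_ge0 ltW).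
  apply: sqr_mulmx_le => //; first exact: gram_sym.
  exact: gram_ge0.
have -> : c^-1 * (c^-1 * (K * inner (M k mu *m d) d)) =
    2 * K * c^-1 * (c^-1 * (2^-1 * inner (M k mu *m d) d)).
  by move: c0; set e := enorm b ^+ 2 => /lt0r_neq0 ?; field.
rewrite -F_pmid_decrease ler_wpM2l ?F_pmid_decrease_le //.
by rewrite !mulr_ge0 ?invr_ge0 ?ltW.
Qed.

Section Bounded.
Variable C : R.
Hypothesis ps_bounded : forall k, normP (ps k) <= C.

Let Ntot : R := \sum_i (nP i)%:R.
Let S : R := 1 + Ntot * C.

Lemma nP_le_Ntot mu : (nP mu)%:R <= Ntot.
Proof. by rewrite /Ntot (bigD1 mu) //= lerDl sumr_ge0. Qed.

Lemma NtotC_ge0 : 0 <= Ntot * C.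
Proof.
have C_ge0 : 0 <= C := le_trans (sqrtr_ge0 _) (ps_bounded 0).
by rewrite mulr_ge0 // sumr_ge0.
Qed.

Lemma mxsum_ps_le k i : mxsum (ps k i) <= S.
Proof.
apply: le_trans (mxsum_le_enorm _) _; apply: ler_wpDl => //.
apply: ler_pM; rewrite ?sqrtr_ge0 ?nP_le_Ntot //.
exact: le_trans (enorm_le_normP _ i) (ps_bounded k).
Qed.

Lemma mxsum_upd_delta_le k mu j i : mxsum (upd (pmid ps k mu) mu (delta_mx j 0) i) <= S.
Proof.
have [<-|ne] := eqVneq mu i; first by rewrite upd_eq mxsum_delta lerDl NtotC_ge0.
by rewrite upd_neq // pmidE /splice; case: ifP => _; apply: mxsum_ps_le.
Qed.

Lemma als_gram_bound : exists2 K, 0 < K & forall k mu u, inner (M k mu *m u) u <= K * inner u u.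
Proof.
have [KU [KU0 U_le]] := multilinear_bound U_ml.
have S_ge0 : 0 <= S by rewrite addr_ge0 ?NtotC_ge0.
set T := Ntot * (KU * S ^+ L).
have W_le k mu : mxsum (W k mu) <= T.
  rewrite mxsum_Wmx; apply: le_trans (_ : \sum_(j < nP mu) KU * S ^+ L <= _).
    by apply: ler_sum => j _; apply: U_le => i; apply: mxsum_upd_delta_le.
  by rewrite sumr_const card_ord -mulr_natl ler_wpM2r ?nP_le_Ntot // mulr_ge0 // exprn_ge0.
exists (1 + T ^+ 2 * mxsum A) => [|k mu u].
  by rewrite ltr_pwDl // mulr_ge0 ?sqr_ge0 ?mxsum_ge0.
apply: le_trans (inner_mulmx_le_mxsum _ _) _; apply: ler_wpM2r; first exact: inner_ge0.
have M_le := le_trans (mxsum_mulmx _ _)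
  (ler_wpM2r (mxsum_ge0 (W k mu)) (mxsum_mulmx (W k mu)^T A)).
rewrite mxsum_tr in M_le; apply: le_trans M_le _.
apply: (@le_trans _ _ (T * mxsum A * T)); last by rewrite mulrAC -expr2 lerDr.
by apply: ler_pM; rewrite ?mulr_ge0 ?mxsum_ge0 ?ler_wpM2r ?mxsum_ge0.
Qed.

Lemma F_als_bounded_below : exists lb, forall k, lb <= F (ps k).
Proof.
have [KU [KU0 U_le]] := multilinear_bound U_ml.
exists (- (c^-1 * (mxsum b * (KU * S ^+ L)))) => k.
apply: (le_trans _ (fobj_ge b A_pd (U (ps k)))); rewrite lerN2 ler_wpM2l ?invr_ge0 ?sqr_ge0 //.
by rewrite ler_wpM2l ?mxsum_ge0 //; apply: U_le => i; apply: mxsum_ps_le.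
Qed.

Lemma als_partial_grad_cvg0 :
  (fun k => \big[Num.max/0]_(mu < L) enorm (partial_grad F (pmid ps k mu) mu)) @ \oo --> (0 : R).
Proof.
have [K K_gt0 M_le] := als_gram_bound.
have [lb F_lb] := F_als_bounded_below.
set D := fun k => F (ps k) - F (ps k.+1).
have D_cvg : D @ \oo --> (0 : R) := nonincreasing_subSn_cvg0 F_als_nonincreasing F_lb.
set Kg := 2 * K * c^-1.
have sqrtD_cvg : (fun k => Num.sqrt (Kg * D k)) @ \oo --> (0 : R).
  rewrite -sqrtr0 -(mulr0 Kg); apply: continuous_cvg; first exact: sqrt_continuous.
  exact: cvgMr.
apply: (squeeze_cvgr _ (cvg_cst 0) sqrtD_cvg); near=> k; apply/andP; split.
  exact: bigmax_ge_id.
apply: bigmax_le => [|mu _]; first exact: sqrtr_ge0.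
rewrite -[enorm _]ger0_norm ?sqrtr_ge0 // -sqrtr_sqr ler_wsqrtr //.
exact: sqr_partial_grad_le.
Unshelve. all: by end_near.
Qed.

End Bounded.

End ALS.

Theorem mainTheorem11 (R : realType) (d : nat) (m : 'I_d -> nat)
  (L : nat) (hLd : (d <= L)%N) (nP : 'I_L -> nat)
  (A : 'M[R]_(\prod_(nu < d) m nu)) (b : 'cV[R]_(\prod_(nu < d) m nu))
  (U : prodP _ nP -> 'cV[R]_(\prod_(nu < d) m nu))
  (ps : nat -> prodP _ nP) :
  A^T = A ->
  (forall v : 'cV[R]_(\prod_(nu < d) m nu), v != 0 -> 0 < inner (A *m v) v) ->
  b != 0 ->
  multilinear U ->
  ALS_seq A b U ps ->
  (exists C : R, forall k, normP (ps k) <= C) ->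
  (fun k => \big[Num.max/0]_(mu < L)
      enorm (partial_grad (fun p => fobj A b (U p)) (pmid ps k mu) mu))
    @ \oo --> (0 : R).
Proof.
move=> sA A_pd b_neq0 U_ml ps_als [C ps_bounded].
exact: (als_partial_grad_cvg0 sA A_pd b_neq0 U_ml ps_als ps_bounded).
Qed.
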